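(* Let $K$ be a real biquadratic field with $\operatorname{sgnrk}(K)\ge 3$, and let $K_i=\mathbb{Q}(\sqrt{D_i})$, $1\le i\le 3$, be its three quadratic subfields, with $D_i>1$ squarefree. Then for each $1\le i\le 3$ there exists a unit $\eta_i\in\mathcal{O}_K^\times$ with $\operatorname{sgn}(\eta_i)=\operatorname{sgn}(\sqrt{D_i})$.
   Context: A real biquadratic field is $K=\mathbb{Q}(\sqrt{D_1},\sqrt{D_2})$ of degree $4$ with $D_1,D_2>1$ squarefree integers. For $\alpha\in K^\times$, $\operatorname{sgn}(\alpha)\in\mathbb{F}_2^4$ records the signs of its four real embeddings ($0$ for positive, $1$ for negative). $\operatorname{sgnrk}(K)$ is the $\mathbb{F}_2$-dimension of the unit signature group $\{\operatorname{sgn}(\eta):\eta\in\mathcal{O}_K^\times\}$. *)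

From HB Require Import structures.
From mathcomp Require Import all_boot all_order all_algebra all_field.
From Stdlib Require Import ClassicalEpsilon.
Set Implicit Arguments. Unset Strict Implicit. Unset Printing Implicit Defensive.
Import Order.TTheory GRing.Theory Num.Theory.
Local Open Scope ring_scope.

Definition squarefree (n : nat) : Prop := forall d : nat, (d * d %| n)%N -> d = 1%N.

(* elements of K = Q(sqrt D1, sqrt D2) in the basis 1, s1, s2, s1*s2 *)
Definition Kelt := (rat * rat * rat * rat)%type.

(* the four real embeddings of K, indexed by j : 'I_4 ;
   bit 0 of j is the sign flip of sqrt D1, bit 1 of j the flip of sqrt D2;
   j = 0 is the embedding with sqrt D_i |-> the positive root. *)
Definition emb (D1 D2 : nat) (j : 'I_4) (x : Kelt) : algC :=
  let: (a, b, c, d) := x in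
  let e1 : algC := (-1) ^+ odd j in
  let e2 : algC := (-1) ^+ odd j./2 in
  let s1 := sqrtC (D1%:R : algC) in
  let s2 := sqrtC (D2%:R : algC) in
  ratr a + e1 * ratr b * s1 + e2 * ratr c * s2 + e1 * e2 * ratr d * (s1 * s2).

Definition sgn (D1 D2 : nat) (x : Kelt) : 'rV['F_2]_4 :=
  \row_(j < 4) (if emb D1 D2 j x < 0 then 1 else 0).

Definition is_OK_unit (D1 D2 : nat) (x : Kelt) : Prop :=
  let v := emb D1 D2 0 x in
  [/\ v != 0, v \in Aint & v^-1 \in Aint].

Definition is_unit_sgn (D1 D2 : nat) (s : 'rV['F_2]_4) : bool :=
  if excluded_middle_informative
       (exists x : Kelt, is_OK_unit D1 D2 x /\ sgn D1 D2 x = s)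
  then true else false.

Definition unit_sgn_group (D1 D2 : nat) : {set 'rV['F_2]_4} :=
  [set s | is_unit_sgn D1 D2 s].

Definition sgnrk (D1 D2 : nat) : nat :=
  \dim <<enum (unit_sgn_group D1 D2)>>%VS.

(* The signatures of units form an F_2-subspace S of F_2^4 which is stable under
   the Galois group V = (Z/2)^2 of K; since V permutes the four embeddings
   regularly, S is an ideal of the group algebra F_2[V].  In F_2[V] the square of
   s is its augmentation, so an odd-weight signature is invertible and then S is
   everything.  Otherwise S lies in the 3-dimensional augmentation ideal of
   even-weight vectors and, as sgnrk K >= 3, equals it.  Finally sqrt D_i has an
   even signature: its conjugates are all +-sqrt D_i and their sum, the trace, is
   rational, which rules out an odd number of minus signs. *)
From mathcomp Require Import all_boot all_order all_algebra all_field.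
From mathcomp Require Import ring.
From Stdlib Require Import Classical ClassicalEpsilon.
Set Implicit Arguments. Unset Strict Implicit. Unset Printing Implicit Defensive.
Import Order.TTheory GRing.Theory Num.Theory.
Local Open Scope ring_scope.

Lemma squarefree1 : squarefree 1.
Proof. by move=> d; rewrite dvdn1 muln_eq1 => /andP[/eqP]. Qed.

Lemma squarefree_sqr_ratio m n (q : rat) :
  squarefree m -> squarefree n -> q ^+ 2 * n%:R = m%:R -> m = n.
Proof.
move=> sqf_m sqf_n qnm.
pose a := `|numq q|%N; pose b := `|denq q|%N.
have abnm : (a * a * n = m * (b * b))%N.
  have den0 : (denq q)%:~R != 0 :> rat by rewrite intr_eq0 denq_neq0.
  have : numq q ^+ 2 * n%:R = m%:R * denq q ^+ 2 :> int.
    apply: (@intr_inj rat); rewrite !rmorphM /= !rmorph_nat -qnm.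
    by rewrite -[in q ^+ 2](divq_num_den q); field.
  by move/(congr1 absz); rewrite !abszM !natz.
have cop_ab : coprime (b * b) (a * a).
  by rewrite coprimeMl !coprimeMr coprime_sym coprime_num_den.
have b1 : b = 1%N.
  by apply: sqf_n; rewrite -(Gauss_dvdr _ cop_ab) abnm dvdn_mull.
move: abnm; rewrite b1 !muln1 => anm.
have a1 : a = 1%N by apply: sqf_m; rewrite -anm dvdn_mulr.
by move: anm; rewrite a1 !mul1n.
Qed.

Lemma squarefree_not_sqr n (q : rat) : squarefree n -> (1 < n)%N -> q ^+ 2 != n%:R.
Proof.
move=> sqf_n n_gt1; apply/eqP => qn.
have n1 : n = 1%N.
  by apply: (squarefree_sqr_ratio (q := q) sqf_n squarefree1); rewrite mulr1.
by rewrite n1 in n_gt1.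
Qed.

Section QuadraticIrrationals.
Variables m n : nat.
Hypotheses (sqf_m : squarefree m) (sqf_n : squarefree n).
Hypotheses (m_gt1 : (1 < m)%N) (n_gt1 : (1 < n)%N) (neq_mn : m <> n).

Local Notation sm := (sqrtC (m%:R : algC)).
Local Notation sn := (sqrtC (n%:R : algC)).

Lemma sqrtC_rat_indep (p q : rat) : ratr p + ratr q * sn = 0 -> p = 0 /\ q = 0.
Proof.
have [-> | q_neq0] := eqVneq q 0.
  by rewrite rmorph0 mul0r addr0 => /eqP; rewrite fmorph_eq0 => /eqP.
move=> /eqP; rewrite addr_eq0 => /eqP pq.
have qC_neq0 : ratr q != 0 :> algC by rewrite fmorph_eq0.
have pqC : ratr (p / q) = - sn by rewrite fmorph_div /= pq; field.
have /eqP[] := squarefree_not_sqr (p / q) sqf_n n_gt1.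
apply: (fmorph_inj (@ratr algC)).
by rewrite rmorphXn /= pqC sqrrN sqrtCK ratr_nat.
Qed.

Lemma sqrtC_notin_quadratic (p q : rat) : sm != ratr p + ratr q * sn.
Proof.
apply/eqP => Esm.
have /sqrtC_rat_indep[Em pq0] :
    ratr (p ^+ 2 + q ^+ 2 * n%:R - m%:R) + ratr (2 * p * q) * sn = 0.
  rewrite !(rmorphD, rmorphN, rmorphM, rmorphXn, rmorph1) /= !ratr_nat.
  by rewrite -(sqrtCK m%:R) Esm sqrrD (exprMn _ _ (sqrtC _)) sqrtCK; ring.
move/eqP: pq0; rewrite !mulf_eq0 pnatr_eq0 /= => /orP[/eqP p0 | /eqP q0].
  apply: neq_mn; apply: (squarefree_sqr_ratio (q := q)) => //.
  by apply/eqP; rewrite -subr_eq0 -Em p0 expr0n add0r.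
have /eqP[] := squarefree_not_sqr p sqf_m m_gt1.
by apply/eqP; rewrite -subr_eq0 -Em q0 expr0n mul0r addr0.
Qed.

Lemma sqrtC_biquadratic_indep (a b c d : rat) :
  ratr a + ratr b * sm + ratr c * sn + ratr d * (sm * sn) = 0 ->
  [/\ a = 0, b = 0, c = 0 & d = 0].
Proof.
move=> Eabcd; pose N := b ^+ 2 - n%:R * d ^+ 2.
have [N0 | N_neq0] := eqVneq N 0.
  have [d0 | d_neq0] := eqVneq d 0.
    move: N0; rewrite /N d0 expr0n mulr0 subr0 => /eqP; rewrite expf_eq0 /= => /eqP b0.
    move: Eabcd; rewrite b0 d0 !rmorph0 !mul0r !addr0 => /sqrtC_rat_indep[a0 c0].
    by split.
  have /eqP[] := squarefree_not_sqr (b / d) sqf_n n_gt1.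
  by rewrite expr_div_n (subr0_eq N0) mulfK // expf_neq0.
(* Multiplying by the conjugate [b - d sn] of [b + d sn] expresses [sm] in Q(sn). *)
have: ratr N * sm + (ratr (a * b - n%:R * c * d) + ratr (b * c - a * d) * sn) = 0.
  rewrite -[RHS](mulr0 (ratr b - ratr d * sn)) -Eabcd.
  rewrite /N !(rmorphD, rmorphN, rmorphM, rmorphXn) /= !ratr_nat.
  by set s := sn; rewrite -(sqrtCK n%:R) -/s; ring.
move=> /eqP; rewrite addr_eq0 => /eqP ENsm.
have N0C : ratr N != 0 :> algC by rewrite fmorph_eq0.
have /eqP[] := sqrtC_notin_quadratic (- (a * b - n%:R * c * d) / N) (- (b * c - a * d) / N).
by apply: (mulfI N0C); rewrite ENsm !fmorph_div !rmorphN /=; field; exact: N0C.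
Qed.
End QuadraticIrrationals.

Lemma Aint_Qconj (x y : algC) :
  (forall p : {poly rat}, root (map_poly ratr p) x -> root (map_poly ratr p) y) ->
  x \in Aint -> y \in Aint.
Proof.
move=> xy Ax; have [p [Dp _] _] := minCpolyP x.
apply: (root_monic_Aint _ (minCpoly_monic x) Ax).
by rewrite Dp; apply: xy; rewrite -Dp root_minCpoly.
Qed.

Lemma real_neq0_mulr_lt0 (R : numDomainType) (u v : R) :
  u \is Num.real -> v \is Num.real -> u != 0 -> v != 0 ->
  (u * v < 0) = (u < 0) (+) (v < 0).
Proof.
move=> ru rv u0 v0; case: (real_ltgt0P ru) => [u_gt0|u_lt0|/eqP]; last by rewrite (negbTE u0).
  by rewrite pmulr_rlt0.
by rewrite nmulr_rlt0 //; case: (real_ltgt0P rv) => [| |/eqP]; rewrite ?(negbTE v0).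
Qed.

Lemma sqr_eq_signed (R : numDomainType) (u r : R) :
  0 < r -> u ^+ 2 = r ^+ 2 -> u = if u < 0 then - r else r.
Proof.
move=> r_gt0 /eqP; rewrite eqf_sqr => /orP[] /eqP ->.
  by rewrite lt_gtF.
by rewrite oppr_lt0 r_gt0.
Qed.

Definition B4 := (bool * bool * bool * bool)%type.

Definition F4 : B4 := (false, false, false, false).

Definition xorB (s t : B4) : B4 :=
  let: (a, b, c, d) := s in let: (a', b', c', d') := t in
  (a (+) a', b (+) b', c (+) c', d (+) d').

Definition selB (k : bool) (s : B4) : B4 := if k then s else F4.

Definition oddB (s : B4) : bool := let: (a, b, c, d) := s in a (+) b (+) c (+) d.

Definition sh1 (s : B4) : B4 := let: (a, b, c, d) := s in (b, a, d, c).
Definition sh2 (s : B4) : B4 := let: (a, b, c, d) := s in (c, d, a, b).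

(* The product of the group algebra F_2[V], V = {0, 1, 2, 3} with xor, on which
   sh1 and sh2 are the translations by 1 and 2. *)
Definition mulB (t s : B4) : B4 :=
  let: (a, b, c, d) := t in
  xorB (xorB (selB a s) (selB b (sh1 s))) (xorB (selB c (sh2 s)) (selB d (sh1 (sh2 s)))).

(* In characteristic 2 and exponent 2, [s * s] is the augmentation of [s]. *)
Lemma mulB_oddK s t : oddB s -> mulB (mulB t s) s = t.
Proof. by case: s t => [[[[] []] []] []] [[[[] []] []] []]. Qed.

Lemma signed_sum_sqr_odd (R : comNzRingType) (r : R) a b c d : oddB (a, b, c, d) ->
  ((if a then - r else r) + (if b then - r else r) + (if c then - r else r)
    + (if d then - r else r)) ^+ 2 = 4%:R * r ^+ 2.
Proof. by case: a b c d => [] [] [] [] //= _; ring. Qed.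

Definition klein_stable (P : B4 -> Prop) : Prop :=
  [/\ forall s t, P s -> P t -> P (xorB s t),
      forall s, P s -> P (sh1 s) & forall s, P s -> P (sh2 s)].

Lemma klein_stable_mulB P t s : klein_stable P -> P s -> P (mulB t s).
Proof.
move=> [PX P1 P2] Ps.
have P0 : P F4.
  by have := PX _ _ Ps Ps; case: (s) => [[[? ?] ?] ?]; rewrite /= !addbb.
have Psel k u : P u -> P (selB k u) by case: k.
by case: t => [[[a b] c] d]; do 2?apply: (PX); apply: (Psel); auto.
Qed.

Lemma klein_stable_odd P s : klein_stable P -> oddB s -> P s -> forall t, P t.
Proof.
move=> kP odd_s Ps t; rewrite -(mulB_oddK t odd_s).
exact: klein_stable_mulB kP Ps.
Qed.

Definition rowB (s : B4) : 'rV['F_2]_4 :=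
  let: (a, b, c, d) := s in \row_(j < 4) (if nth false [:: a; b; c; d] j then 1 else 0).

Lemma rowB_xor s t : rowB (xorB s t) = rowB s + rowB t.
Proof.
have F2_add (k l : bool) : (if k (+) l then 1 else 0 : 'F_2) =
    (if k then 1 else 0) + (if l then 1 else 0).
  by case: k; case: l; rewrite ?addr0 ?add0r //; apply: val_inj.
case: s t => [[[a b] c] d] [[[a' b'] c'] d'].
by apply/rowP => -[[|[|[|[|//]]]] ?]; rewrite !mxE /=.
Qed.

Lemma rowB_F4 : rowB F4 = 0.
Proof. by apply/rowP => -[[|[|[|[|//]]]] ?]; rewrite !mxE. Qed.

Definition evenV : {vspace 'rV['F_2]_4} :=
  <<[:: rowB (true, true, false, false); rowB (true, false, true, false);
        rowB (true, false, false, true)]>>%VS.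

Lemma rowB_even s : ~~ oddB s -> rowB s \in evenV.
Proof.
have rowB_sel k u : rowB u \in evenV -> rowB (selB k u) \in evenV.
  by case: k; rewrite /selB ?rowB_F4 ?mem0v.
case: s => [[[a b] c] d] even_s.
have -> : (a, b, c, d) = xorB (xorB (selB b (true, true, false, false))
    (selB c (true, false, true, false))) (selB d (true, false, false, true)).
  by move: even_s; case: a; case: b; case: c; case: d.
by rewrite !rowB_xor !memvD // rowB_sel // memv_span // !inE eqxx ?orbT.
Qed.

Lemma span_F2_closed (vT : vectType 'F_2) (A : {pred vT}) (X : seq vT) :
  0 \in A -> {in A &, forall u v, u + v \in A} -> {subset X <= A} ->
  {subset <<X>>%VS <= A}.
Proof.
move=> A0 AD; elim: X => [_ v | x X IHX sxXA v]; first by rewrite span_nil memv0 => /eqP ->.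
rewrite span_cons => /memv_addP[_ /vlineP[k ->] [u Xu ->]].
apply: AD; last by apply: IHX => // y Xy; apply: sxXA; rewrite inE Xy orbT.
case: k => [[|[|//]] ?]; first by rewrite (_ : Ordinal _ = 0) ?scale0r //; apply: val_inj.
by rewrite (_ : Ordinal _ = 1) ?scale1r; [apply: sxXA; rewrite inE eqxx | apply: val_inj].
Qed.

Definition real_biquadratic (D1 D2 : nat) : Prop :=
  [/\ (1 < D1)%N, (1 < D2)%N, squarefree D1, squarefree D2 & D1 <> D2].

Section RealBiquadraticField.
Variables D1 D2 : nat.

Local Notation s1 := (sqrtC (D1%:R : algC)).
Local Notation s2 := (sqrtC (D2%:R : algC)).

Definition cstK (r : rat) : Kelt := (r, 0, 0, 0).

Definition addK (x y : Kelt) : Kelt :=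
  let: (a, b, c, d) := x in let: (a', b', c', d') := y in (a + a', b + b', c + c', d + d').

Definition mulK (x y : Kelt) : Kelt :=
  let: (a, b, c, d) := x in let: (a', b', c', d') := y in
  (a * a' + D1%:R * b * b' + D2%:R * c * c' + D1%:R * D2%:R * d * d',
   a * b' + b * a' + D2%:R * (c * d' + d * c'),
   a * c' + c * a' + D1%:R * (b * d' + d * b'),
   a * d' + d * a' + b * c' + c * b').

Definition galK (j : 'I_4) (x : Kelt) : Kelt :=
  let: (a, b, c, d) := x in
  (a, (-1) ^+ odd j * b, (-1) ^+ odd j./2 * c, (-1) ^+ odd j * (-1) ^+ odd j./2 * d).

Lemma emb_cst j r : emb D1 D2 j (cstK r) = ratr r.
Proof. by rewrite /emb /= !rmorph0 !(mulr0, mul0r, addr0). Qed.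

Lemma emb_add j x y : emb D1 D2 j (addK x y) = emb D1 D2 j x + emb D1 D2 j y.
Proof.
case: x y => [[[a b] c] d] [[[a' b'] c'] d'].
by rewrite /emb /= !rmorphD; ring.
Qed.

Lemma emb_mul j x y : emb D1 D2 j (mulK x y) = emb D1 D2 j x * emb D1 D2 j y.
Proof.
case: x y => [[[a b] c] d] [[[a' b'] c'] d'].
rewrite /emb /= !(rmorphD, rmorphM) /= !ratr_nat.
set r1 := s1; set r2 := s2; rewrite -(sqrtCK D1%:R) -(sqrtCK D2%:R) -/r1 -/r2.
by case: (odd j) (odd j./2) => [] []; ring.
Qed.

Lemma emb_galK j x : emb D1 D2 j x = emb D1 D2 0 (galK j x).
Proof.
by case: x => [[[a b] c] d]; rewrite /emb /= !(rmorphM, rmorphXn, rmorphN1) /=; ring.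
Qed.

Lemma galKK j : involutive (galK j).
Proof.
case=> [[[a b] c] d]; rewrite /galK.
by case: (odd j) (odd j./2) => [] []; congr (_, _, _, _); ring.
Qed.

Lemma emb_trace x :
  emb D1 D2 0 x + emb D1 D2 1 x + emb D1 D2 2 x + emb D1 D2 3 x = 4%:R * ratr x.1.1.1.
Proof. by case: x => [[[a b] c] d]; rewrite /emb /=; ring. Qed.

Lemma emb_horner (p : {poly rat}) x :
  exists y, forall j, (map_poly ratr p).[emb D1 D2 j x] = emb D1 D2 j y.
Proof.
elim/poly_ind: p => [|p c [y Ey]].
  by exists (cstK 0) => j; rewrite rmorph0 horner0 emb_cst rmorph0.
exists (addK (mulK y x) (cstK c)) => j.
by rewrite rmorphD rmorphM /= map_polyX map_polyC hornerMXaddC emb_add emb_mul emb_cst Ey.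
Qed.

Lemma norm_galK_rat x :
  exists N : rat, mulK x (mulK (galK 1 x) (mulK (galK 2 x) (galK 3 x))) = cstK N.
Proof.
set y := mulK x _; exists y.1.1.1.
have : [/\ y.1.1.2 = 0, y.1.2 = 0 & y.2 = 0].
  by rewrite /y; case: x {y} => [[[a b] c] d] /=; split; ring.
by case: y => [[[a b] c] d] /= [-> -> ->].
Qed.

Definition sg (x : Kelt) : B4 :=
  (emb D1 D2 0 x < 0, emb D1 D2 1 x < 0, emb D1 D2 2 x < 0, emb D1 D2 3 x < 0).

Lemma sgn_sg x : sgn D1 D2 x = rowB (sg x).
Proof.
apply/rowP => j; rewrite /rowB /sg !mxE; case: j => [[|[|[|[|//]]]] j_lt4] /=;
  by congr (if emb _ _ _ _ < 0 then _ else _); apply: val_inj.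
Qed.

Lemma emb_real j x : emb D1 D2 j x \is Num.real.
Proof.
have sqrt_real n : sqrtC (n%:R : algC) \is Num.real by rewrite sqrtC_real ?ler0n.
have ratr_real (q : rat) : (ratr q : algC) \is Num.real by apply/Creal_Crat/Crat_rat.
case: x => [[[a b] c] d].
by rewrite /emb /= !(ratr_real, sqrt_real, rpredX, rpredN, rpred1, rpredD, rpredM).
Qed.

Lemma sg_galK1 x : sg (galK 1 x) = sh1 (sg x).
Proof.
case: x => [[[a b] c] d]; rewrite /sg /=.
by congr (_, _, _, _); congr (_ < 0); rewrite /emb /= !(rmorphM, rmorphXn, rmorphN1) /=; ring.
Qed.

Lemma sg_galK2 x : sg (galK 2 x) = sh2 (sg x).
Proof.
case: x => [[[a b] c] d]; rewrite /sg /=.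
by congr (_, _, _, _); congr (_ < 0); rewrite /emb /= !(rmorphM, rmorphXn, rmorphN1) /=; ring.
Qed.

Lemma unit_one : is_OK_unit D1 D2 (cstK 1).
Proof. by rewrite /is_OK_unit emb_cst rmorph1 invr1; split; rewrite ?oner_neq0 ?Aint1. Qed.

Lemma unit_sgn_groupP s :
  s \in unit_sgn_group D1 D2 <-> exists x, is_OK_unit D1 D2 x /\ sgn D1 D2 x = s.
Proof. by rewrite inE /is_unit_sgn; case: excluded_middle_informative. Qed.

Lemma unit_sgn_group0 : 0 \in unit_sgn_group D1 D2.
Proof.
apply/unit_sgn_groupP; exists (cstK 1); split; first exact: unit_one.
by rewrite sgn_sg -rowB_F4 /sg !emb_cst rmorph1 ltr10.
Qed.

Hypothesis K_biquad : real_biquadratic D1 D2.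

Lemma emb0_inj : injective (emb D1 D2 0).
Proof.
have [D1_gt1 D2_gt1 sqf_D1 sqf_D2 neq_D12] := K_biquad.
move=> [[[a b] c] d] [[[a' b'] c'] d'] /eqP; rewrite -subr_eq0 => /eqP E.
have /(sqrtC_biquadratic_indep sqf_D1 sqf_D2 D1_gt1 D2_gt1 neq_D12)[] :
    ratr (a - a') + ratr (b - b') * s1 + ratr (c - c') * s2 + ratr (d - d') * (s1 * s2) = 0.
  by rewrite -E /emb /= !rmorphB /=; ring.
by move=> /subr0_eq -> /subr0_eq -> /subr0_eq -> /subr0_eq ->.
Qed.

Lemma emb_inj j : injective (emb D1 D2 j).
Proof. by move=> x y; rewrite !(emb_galK j) => /emb0_inj /(can_inj (galKK j)). Qed.

Lemma emb_eq0 j x : (emb D1 D2 j x == 0) = (x == cstK 0).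
Proof. by rewrite -(inj_eq (@emb_inj j)) emb_cst rmorph0. Qed.

Lemma emb_neq0 j x : emb D1 D2 0 x != 0 -> emb D1 D2 j x != 0.
Proof. by rewrite !emb_eq0. Qed.

Lemma Aint_emb j x : emb D1 D2 0 x \in Aint -> emb D1 D2 j x \in Aint.
Proof.
apply: Aint_Qconj => p; have [y Ey] := emb_horner p x.
by rewrite /root !Ey !emb_eq0.
Qed.

Lemma exists_inv_Kelt x :
  emb D1 D2 0 x != 0 -> exists y, forall j, emb D1 D2 j x * emb D1 D2 j y = 1.
Proof.
move=> x0; have [N EN] := norm_galK_rat x.
set x' := mulK (galK 1 x) _ in EN.
have EjN j : emb D1 D2 j x * emb D1 D2 j x' = ratr N by rewrite -emb_mul EN emb_cst.
have xj j : emb D1 D2 j x != 0 by apply: emb_neq0.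
have N0 : ratr N != 0 :> algC.
  by rewrite -(EjN 0) /x' !emb_mul -!emb_galK !mulf_neq0.
exists (mulK (cstK N^-1) x') => j.
by rewrite emb_mul emb_cst mulrCA EjN fmorphV mulVf.
Qed.

Lemma unit_emb j x : is_OK_unit D1 D2 x ->
  [/\ emb D1 D2 j x != 0, emb D1 D2 j x \in Aint & (emb D1 D2 j x)^-1 \in Aint].
Proof.
case=> x0 Ax Aix; have [y Ey] := exists_inv_Kelt x0.
have Einv k : (emb D1 D2 k x)^-1 = emb D1 D2 k y.
  by rewrite -[LHS]mulr1 -(Ey k) mulKf // emb_neq0.
split; [exact: emb_neq0 | exact: Aint_emb |].
by rewrite Einv; apply: Aint_emb; rewrite -Einv.
Qed.

Lemma unit_mulK x y :
  is_OK_unit D1 D2 x -> is_OK_unit D1 D2 y -> is_OK_unit D1 D2 (mulK x y).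
Proof.
rewrite /is_OK_unit emb_mul => -[x0 Ax Aix] [y0 Ay Aiy].
by split; rewrite ?mulf_neq0 ?invfM ?rpredM.
Qed.

Lemma unit_galK j x : is_OK_unit D1 D2 x -> is_OK_unit D1 D2 (galK j x).
Proof. by rewrite /is_OK_unit -emb_galK; apply: unit_emb. Qed.

Lemma sg_mulK x y : is_OK_unit D1 D2 x -> is_OK_unit D1 D2 y ->
  sg (mulK x y) = xorB (sg x) (sg y).
Proof.
move=> Ux Uy; have lt0M j : (emb D1 D2 j (mulK x y) < 0) =
    (emb D1 D2 j x < 0) (+) (emb D1 D2 j y < 0).
  have [x0 _ _] := unit_emb j Ux; have [y0 _ _] := unit_emb j Uy.
  by rewrite emb_mul real_neq0_mulr_lt0 ?emb_real.
by rewrite /sg !lt0M.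
Qed.

Definition unit_sg (s : B4) : Prop := exists2 x, is_OK_unit D1 D2 x & sg x = s.

Lemma klein_stable_unit_sg : klein_stable unit_sg.
Proof.
split.
- move=> _ _ [x Ux <-] [y Uy <-].
  by exists (mulK x y); [exact: unit_mulK | exact: sg_mulK].
- by move=> _ [x Ux <-]; exists (galK 1 x); [exact: unit_galK | exact: sg_galK1].
- by move=> _ [x Ux <-]; exists (galK 2 x); [exact: unit_galK | exact: sg_galK2].
Qed.

Lemma unit_sgn_groupD :
  {in unit_sgn_group D1 D2 &, forall u v, u + v \in unit_sgn_group D1 D2}.
Proof.
move=> _ _ /unit_sgn_groupP[x [Ux <-]] /unit_sgn_groupP[y [Uy <-]].
apply/unit_sgn_groupP; exists (mulK x y); split; first exact: unit_mulK.
by rewrite !sgn_sg sg_mulK ?rowB_xor.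
Qed.

Lemma unit_sgn_group_even : (3 <= sgnrk D1 D2)%N ->
  (forall x, is_OK_unit D1 D2 x -> ~~ oddB (sg x)) ->
  forall s, ~~ oddB s -> rowB s \in unit_sgn_group D1 D2.
Proof.
move=> rk3 even_units s even_s.
have sub : (<<enum (unit_sgn_group D1 D2)>> <= evenV)%VS.
  apply/span_subvP => u; rewrite mem_enum => /unit_sgn_groupP[x [Ux <-]].
  by rewrite sgn_sg rowB_even ?even_units.
have VE : <<enum (unit_sgn_group D1 D2)>>%VS = evenV.
  by apply/eqP; rewrite eqEdim sub /=; apply: leq_trans rk3; exact: dim_span.
apply: (span_F2_closed (X := enum (unit_sgn_group D1 D2)) unit_sgn_group0 unit_sgn_groupD).
  by move=> u; rewrite mem_enum.
by rewrite VE rowB_even.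
Qed.

Lemma emb_sqrt_sqr D w :
  emb D1 D2 0 w = sqrtC D%:R -> forall j, emb D1 D2 j w ^+ 2 = D%:R.
Proof.
move=> Ew; have ww : mulK w w = cstK D%:R.
  by apply: emb0_inj; rewrite emb_mul emb_cst ratr_nat -expr2 Ew sqrtCK.
by move=> j; rewrite expr2 -emb_mul ww emb_cst ratr_nat.
Qed.

Lemma sg_sqrt_even D w : (1 < D)%N -> squarefree D ->
  emb D1 D2 0 w = sqrtC D%:R -> ~~ oddB (sg w).
Proof.
move=> D_gt1 sqf_D Ew; apply/negP => odd_w.
have r_gt0 : 0 < sqrtC (D%:R : algC) by rewrite sqrtC_gt0 ltr0n ltnW.
have Ej j : emb D1 D2 j w =
    if emb D1 D2 j w < 0 then - sqrtC D%:R else sqrtC D%:R.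
  by apply: sqr_eq_signed; rewrite // (emb_sqrt_sqr Ew) sqrtCK.
have := signed_sum_sqr_odd (sqrtC (D%:R : algC)) odd_w.
rewrite -!Ej emb_trace sqrtCK => tr.
have /eqP[] := squarefree_not_sqr (2 * w.1.1.1) sqf_D D_gt1.
have four_neq0 : (4%:R : algC) != 0 by rewrite pnatr_eq0.
apply: (fmorph_inj (@ratr algC)); apply: (mulfI four_neq0).
by rewrite rmorph_nat -tr rmorphXn rmorphM /= rmorph_nat; ring.
Qed.
End RealBiquadraticField.

Theorem lemma3p3 (D1 D2 : nat) :
  (1 < D1)%N -> (1 < D2)%N -> squarefree D1 -> squarefree D2 -> D1 <> D2 ->
  (3 <= sgnrk D1 D2)%N ->
  forall (D : nat) (w : Kelt),
    (1 < D)%N -> squarefree D ->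
    emb D1 D2 0 w = sqrtC (D%:R : algC) ->
    exists eta : Kelt, is_OK_unit D1 D2 eta /\ sgn D1 D2 eta = sgn D1 D2 w.
Proof.
move=> D1_gt1 D2_gt1 sqf_D1 sqf_D2 neq_D12 rk3 D w D_gt1 sqf_D Ew.
have K : real_biquadratic D1 D2 by split.
rewrite sgn_sg.
have [[x Ux odd_x] | no_odd] := classic (exists2 x, is_OK_unit D1 D2 x & oddB (sg D1 D2 x)).
  have [eta Ueta Eeta] :=
    klein_stable_odd (klein_stable_unit_sg K) odd_x (ex_intro2 _ _ x Ux erefl) (sg D1 D2 w).
  by exists eta; rewrite sgn_sg Eeta.
apply/unit_sgn_groupP; apply: unit_sgn_group_even K rk3 _ _ (sg_sqrt_even K D_gt1 sqf_D Ew).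
by move=> x Ux; apply/negP => odd_x; apply: no_odd; exists x.
Qed.
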